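(* Let $(X,\tau)$ be an extended locally convex space and let $\tau_F$ be its finest locally convex topology. Then $(X,\tau)$ is Hausdorff if and only if $(X,\tau_F)$ is Hausdorff.
   Context: An extended seminorm on a vector space $X$ over $\mathbb{R}$ or $\mathbb{C}$ is a map $\rho:X\to[0,\infty]$ with $\rho(\alpha x)=|\alpha|\rho(x)$ and $\rho(x+y)\le\rho(x)+\rho(y)$. An extended locally convex space $(X,\tau)$ is a vector space with the topology induced by a family $\{\rho_i\}$ of extended seminorms (neighborhood base at $x_0$: $\{x:\max_{i\in J}\rho_i(x-x_0)<\varepsilon\}$, $J$ finite, $\varepsilon>0$). A locally convex topology is one induced in this way by finite-valued seminorms. The finest locally convex topology $\tau_F$ of $(X,\tau)$ is the locally convex topology on $X$ with $\tau_F\subseteq\tau$ such that every locally convex topology $\sigma\subseteq\tau$ on $X$ satisfies $\sigma\subseteq\tau_F$. *)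

From mathcomp Require Import all_boot all_order all_algebra.
From mathcomp Require Import classical_sets cardinality reals constructive_ereal ereal.
From mathcomp Require Import complex.
Import GRing.Theory Num.Theory.

Set Implicit Arguments.
Unset Strict Implicit.
Unset Printing Implicit Defensive.

Local Open Scope classical_set_scope.
Local Open Scope ring_scope.
Local Open Scope ereal_scope.

(* The real numbers are an arbitrary [R : realType]; the scalar field [K] is
   either R or R[i]; [absK : K -> R] is the absolute value of scalars. *)

Section ExtendedLCS.
Variables (R : realType) (K : numFieldType) (absK : K -> R) (X : lmodType K).

Definition ext_seminorm (rho : X -> \bar R) : Prop :=
  [/\ forall x, 0 <= rho x,
      forall (a : K) x, rho (a *: x) = (absK a)%:E * rho x &
      forall x y, rho (x + y)%R <= rho x + rho y].

Definition seminorm (rho : X -> \bar R) : Prop :=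
  ext_seminorm rho /\ forall x, rho x < +oo.

Definition induced_topology (I : Type) (rho : I -> X -> \bar R) : set (set X) :=
  [set U | forall x0, U x0 ->
     exists (J : set I) (eps : R), [/\ finite_set J, (0 < eps)%R &
       [set x | forall i, J i -> rho i (x - x0)%R < eps%:E] `<=` U]].

Definition ext_locally_convex (tau : set (set X)) : Prop :=
  exists (I : Type) (rho : I -> X -> \bar R),
    (forall i, ext_seminorm (rho i)) /\ tau = induced_topology rho.

Definition locally_convex (sigma : set (set X)) : Prop :=
  exists (I : Type) (rho : I -> X -> \bar R),
    (forall i, seminorm (rho i)) /\ sigma = induced_topology rho.

Definition finest_lc_topology (tau tauF : set (set X)) : Prop :=
  [/\ locally_convex tauF, tauF `<=` tau &
      forall sigma, locally_convex sigma -> sigma `<=` tau -> sigma `<=` tauF].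

Definition hausdorff (tau : set (set X)) : Prop :=
  forall x y : X, x <> y ->
    exists U V, [/\ tau U, tau V, U x, V y & U `&` V = set0].

End ExtendedLCS.

Definition absC (R : realType) (z : R[i]) : R := ComplexField.Normc.normc z.

(** If [x <> y] in the Hausdorff space [(X, tau)], some generating extended
    seminorm [rho] is nonzero at [x - y].  Hahn-Banach still works for a
    sublinear functional with values in [[0, +oo]]: by Zorn's lemma on graphs
    of partial real-linear functionals dominated by [rho], one gets a
    real-linear [f <= rho] with [f (x - y) > 0].  Then [q = |f|], or over the
    complex numbers [q z = |f z - i f (i z)|], is a finite seminorm with
    [q <= 2 rho] and [q (x - y) > 0].  The topology of [q] is locally convex
    and coarser than [tau], hence coarser than [tau_F], and its balls of
    radius [q (x - y) / 2] around [x] and [y] are disjoint.  Conversely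
    [tau_F] is coarser than [tau]. *)

From HB Require Import structures.
From mathcomp Require Import all_boot all_order all_algebra.
From mathcomp Require Import classical_sets cardinality reals constructive_ereal ereal.
From mathcomp Require Import complex.
From mathcomp Require Import boolp ring lra.
Import GRing.Theory Num.Theory Order.TTheory.

Set Implicit Arguments.
Unset Strict Implicit.
Unset Printing Implicit Defensive.

Local Open Scope classical_set_scope.
Local Open Scope ring_scope.

Section SeminormTopology.
Variables (R : realType) (K : numFieldType) (absK : K -> R) (X : lmodType K).
Hypotheses (absKN1 : absK (-1) = 1) (absK0 : absK 0 = 0).

Lemma ext_seminormN (rho : X -> \bar R) : ext_seminorm absK rho ->
  forall x, rho (- x) = rho x.
Proof. by case=> _ rhoZ _ x; rewrite -scaleN1r rhoZ absKN1 mul1e. Qed.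

Lemma ext_seminorm0 (rho : X -> \bar R) : ext_seminorm absK rho -> rho 0 = 0%E.
Proof. by case=> _ rhoZ _; rewrite -(scale0r (0 : X)) rhoZ absK0 mul0e. Qed.

Definition real_seminorm (q : X -> R) :=
  [/\ forall x, 0 <= q x, forall a x, q (a *: x) = absK a * q x &
      forall x y, q (x + y) <= q x + q y].

Lemma real_seminorm_EFin q : real_seminorm q -> seminorm absK (fun x => (q x)%:E).
Proof.
case=> q_ge0 qZ qD; split=> [|x]; last exact: ltry.
by split=> [x|a x|x y]; rewrite ?lee_fin ?qZ ?EFinM -?EFinD ?lee_fin.
Qed.

Lemma real_seminorm0 q : real_seminorm q -> q 0 = 0.
Proof. by case=> _ qZ _; rewrite -(scale0r (0 : X)) qZ absK0 mul0r. Qed.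

Lemma real_seminormN q : real_seminorm q -> forall x, q (- x) = q x.
Proof. by case=> _ qZ _ x; rewrite -scaleN1r qZ absKN1 mul1r. Qed.

Definition seminorm_topology (q : X -> R) :=
  induced_topology (fun _ : unit => fun x => (q x)%:E).

Lemma seminorm_topology_lc q : real_seminorm q ->
  locally_convex absK (seminorm_topology q).
Proof.
move=> qsn; exists unit, (fun _ x => (q x)%:E).
by split=> // _; exact: real_seminorm_EFin.
Qed.

Lemma seminorm_topology_sub (I : Type) (rho : I -> X -> \bar R) i q (C : R) :
  0 < C -> (forall x, ((q x)%:E <= C%:E * rho i x)%E) ->
  seminorm_topology q `<=` induced_topology rho.
Proof.
move=> C_gt0 qC U qU x0 Ux0.
have [J [eps [_ eps_gt0 ballU]]] := qU x0 Ux0.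
exists [set i], (eps / C); split; [exact: finite_set1 | by rewrite divr_gt0 |].
move=> x /(_ i erefl) rho_x; apply: ballU => j _ /=.
apply: le_lt_trans (qC _) _.
by rewrite -lte_pdivlMl // -EFinM mulrC.
Qed.

Lemma seminorm_ball_open q x (r : R) : real_seminorm q ->
  seminorm_topology q [set z | q (z - x) < r].
Proof.
case=> _ _ qD x0 /= x0x; exists [set tt], (r - q (x0 - x)).
split; [exact: finite_set1 | by rewrite subr_gt0 |].
move=> z /(_ tt erefl); rewrite lte_fin /= => zx0.
by have := qD (z - x0) (x0 - x); rewrite addrA subrK => ?; lra.
Qed.

Lemma seminorm_topology_separates q x y : real_seminorm q -> 0 < q (x - y) ->
  exists U V, [/\ seminorm_topology q U, seminorm_topology q V, U x, V y &
                  U `&` V = set0].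
Proof.
move=> qsn qxy; pose r := q (x - y) / 2.
exists [set z | q (z - x) < r], [set z | q (z - y) < r].
split; try exact: seminorm_ball_open.
- by rewrite /= subrr (real_seminorm0 qsn) divr_gt0.
- by rewrite /= subrr (real_seminorm0 qsn) divr_gt0.
apply/seteqP; split=> // z [/= zx zy]; case: (qsn) => _ _ qD.
have := qD (x - z) (z - y).
by rewrite addrA subrK -[x - z]opprB (real_seminormN qsn) => ?; rewrite /r in zx zy; lra.
Qed.

Lemma ext_seminorm_separates (I : Type) (rho : I -> X -> \bar R) x y :
  (forall i, ext_seminorm absK (rho i)) -> hausdorff (induced_topology rho) ->
  x <> y -> exists i, rho i (x - y) <> 0%E.
Proof.
move=> rho_sn T2 /T2 [U [V [UT _ Ux Vy UV]]].
apply: contrapT => /forallNP rho_xy.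
have [J [eps [_ eps_gt0 ballU]]] := UT x Ux.
suff Uy : U y by have : (U `&` V) y by []; rewrite UV.
apply: ballU => i _ /=.
by rewrite -opprB (ext_seminormN (rho_sn i)) (contrapT (rho_xy i)) lte_fin.
Qed.

Definition has_seminorm_minorants :=
  forall rho : X -> \bar R, ext_seminorm absK rho -> forall v, rho v <> 0%E ->
    exists2 q, real_seminorm q & 0 < q v /\
      exists2 C : R, 0 < C & forall x, ((q x)%:E <= C%:E * rho x)%E.

Theorem hausdorff_finest_lc : has_seminorm_minorants ->
  forall tau tauF : set (set X), ext_locally_convex absK tau ->
  finest_lc_topology absK tau tauF ->
  (hausdorff tau <-> hausdorff tauF).
Proof.
move=> minor _ tauF [I [rho [rho_sn ->]]] [_ tauF_sub tauF_max].
split=> [T2 x y xy | T2F x y /T2F [U [V [UF VF Ux Vy UV]]]]; last first.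
  by exists U, V; split => //; exact: tauF_sub.
have [i rho_xy] := ext_seminorm_separates rho_sn T2 xy.
have [q qsn [q_xy [C C_gt0 qC]]] := minor _ (rho_sn i) _ rho_xy.
have q_tauF := tauF_max _ (seminorm_topology_lc qsn) (seminorm_topology_sub C_gt0 qC).
have [U [V [Uq Vq Ux Vy UV]]] := seminorm_topology_separates qsn q_xy.
by exists U, V; split => //; exact: q_tauF.
Qed.

End SeminormTopology.

Section ExtendedHahnBanach.
Variables (R : realType) (V : lmodType R) (rho : V -> \bar R).
Hypothesis rho_sn : ext_seminorm (@Num.norm R R) rho.

Let rho_ge0 x : (0 <= rho x)%E. Proof. by case: rho_sn. Qed.
Let rhoZ t x : rho (t *: x) = (`|t|%:E * rho x)%E. Proof. by case: rho_sn. Qed.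
Let rhoD x y : (rho (x + y) <= rho x + rho y)%E. Proof. by case: rho_sn. Qed.
Let rhoN : forall x, rho (- x) = rho x :=
  ext_seminormN (absK := Num.norm) (normrN1 R) rho_sn.
Let rho0 : rho 0 = 0%E := ext_seminorm0 (absK := Num.norm) (normr0 R) rho_sn.

(* [G (d, a)] reads [f d = a] for a partial linear functional [f <= rho]. *)
Definition dominated_graph (G : set (V * R)) :=
  [/\ forall p q, G p -> G q -> G (p.1 + q.1, p.2 + q.2),
      forall t p, G p -> G (t *: p.1, t * p.2) &
      forall p, G p -> ((p.2)%:E <= rho p.1)%E].

Definition graph_extension (G : set (V * R)) (w : V) (c : R) :=
  [set p | exists t d a, G (d, a) /\ p = (d + t *: w, a + t * c)].

Lemma graph_extension_sub G w c : G `<=` graph_extension G w c.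
Proof. by move=> [d a] Gda; exists 0, d, a; rewrite scale0r mul0r !addr0. Qed.

Section DominatedGraph.
Variable G : set (V * R).
Hypothesis domG : dominated_graph G.

Lemma dominated_graph00 : G !=set0 -> G (0, 0).
Proof. by case: domG => _ GZ _ [[d a] /(GZ 0)]; rewrite scale0r mul0r. Qed.

Lemma dominated_graphN d a : G (d, a) -> G (- d, - a).
Proof. by case: domG => _ GZ _ /(GZ (-1)); rewrite scaleN1r mulN1r. Qed.

Lemma dominated_graph_fun x a b : G (x, a) -> G (x, b) -> a = b.
Proof.
case: domG => GD _ Gle xa xb.
have ab := Gle _ (GD _ _ xa (dominated_graphN xb)).
have ba := Gle _ (GD _ _ xb (dominated_graphN xa)).
move: ab ba; rewrite /= !subrr rho0 !lee_fin !subr_le0 => ab ba.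
by apply/eqP; rewrite eq_le ab ba.
Qed.

Lemma graph_extension_new w c : G !=set0 -> graph_extension G w c (w, c).
Proof.
by move=> /dominated_graph00 G00; exists 1, 0, 0; rewrite scale1r mul1r !add0r.
Qed.

Lemma graph_extension_value w : G !=set0 -> exists c, forall d a, G (d, a) ->
  ((a + c)%:E <= rho (d + w))%E /\ ((a - c)%:E <= rho (d - w))%E.
Proof.
move=> G_n0; case: (domG) => GD _ Gle.
have cross d a d' a' : G (d, a) -> G (d', a') ->
    ((a + a')%:E <= rho (d - w) + rho (d' + w))%E.
  move=> Gda Gda'; apply: le_trans (Gle _ (GD _ _ Gda Gda')) _ => /=.
  by rewrite -[d + d']addr0 -(addNr w) addrACA; exact: rhoD.
(* [c] must lie between the [a - rho (d - w)] and the [rho (d' + w) - a'];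
   [cross] says that every lower value is below every upper one. *)
pose S := [set r | exists d a e, [/\ G (d, a), rho (d - w) = e%:E & r = a - e]].
exists (sup S) => d a Gda; split.
- case E : (rho (d + w)) => [e| |]; [|exact: leey| by have := rho_ge0 (d + w); rewrite E].
  have S_ub : ubound S (e - a).
    move=> _ [d1 [a1 [e1 [Gda1 E1 ->]]]].
    by have := cross _ _ _ _ Gda1 Gda; rewrite E1 E -EFinD lee_fin => ?; lra.
  have S_n0 : S !=set0.
    exists (- a - e), (- d), (- a), e; rewrite -opprD rhoN E.
    by split => //; exact: dominated_graphN.
  by have := ge_sup S_n0 S_ub; rewrite lee_fin => ?; lra.
- case E : (rho (d - w)) => [e| |]; [|exact: leey| by have := rho_ge0 (d - w); rewrite E].
  have S_ub : ubound S (e + a).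
    move=> _ [d1 [a1 [e1 [Gda1 E1 ->]]]].
    have := cross _ _ _ _ Gda1 (dominated_graphN Gda).
    by rewrite [- d + w]addrC -[w - d]opprB rhoN E1 E -EFinD lee_fin => ?; lra.
  have : a - e <= sup S by apply: ub_le_sup; [exists (e + a) | exists d, a, e].
  by rewrite lee_fin => ?; lra.
Qed.

Lemma graph_extension_shift w c t d a : 0 < t -> G (d, a) ->
  (forall d a, G (d, a) -> ((a + c)%:E <= rho (d + w))%E) ->
  ((a + t * c)%:E <= rho (d + t *: w))%E.
Proof.
move=> t_gt0 Gda Gwc; case: domG => _ GZ _.
have := Gwc _ _ (GZ t^-1 _ Gda) => /=.
have -> : d + t *: w = t *: (t^-1 *: d + w).
  by rewrite scalerDr scalerA mulfV ?gt_eqF // scale1r.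
have -> : a + t * c = t * (t^-1 * a + c).
  by rewrite mulrDr mulrA mulfV ?gt_eqF // mul1r.
by rewrite rhoZ gtr0_norm // EFinM; apply: lee_wpmul2l; rewrite lee_fin ltW.
Qed.

Lemma graph_extension_dominated w c : (forall d a, G (d, a) ->
    ((a + c)%:E <= rho (d + w))%E /\ ((a - c)%:E <= rho (d - w))%E) ->
  dominated_graph (graph_extension G w c).
Proof.
move=> Gwc; case: (domG) => GD GZ Gle; split.
- move=> _ _ [t [d [a [Gda ->]]]] [t' [d' [a' [Gda' ->]]]] /=.
  exists (t + t'), (d + d'), (a + a'); split; first exact: GD Gda Gda'.
  by rewrite scalerDl mulrDl; congr pair; rewrite addrACA.
- move=> u _ [t [d [a [Gda ->]]]] /=.
  exists (u * t), (u *: d), (u * a); split; first exact: GZ u _ Gda.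
  by rewrite scalerDr scalerA mulrDr mulrA.
- move=> _ [t [d [a [Gda ->]]]] /=.
  have [t_lt0|t_gt0|->] := ltgtP t 0.
  + have := @graph_extension_shift (- w) (- c) (- t) d a.
    rewrite mulrNN scaleNr scalerN opprK; apply => //; first by rewrite oppr_gt0.
    by move=> ? ? /Gwc [].
  + by apply: graph_extension_shift => // ? ? /Gwc [].
  + by rewrite scale0r mul0r !addr0; exact: Gle Gda.
Qed.

End DominatedGraph.

Lemma dominated_graph_bigcup (F : set (set (V * R))) :
  (forall G, F G -> dominated_graph G) -> total_on F subset ->
  dominated_graph (\bigcup_(G in F) G).
Proof.
move=> Fdom Ftot; split.
- move=> p q [G FG Gp] [H FH Hq].
  have [GH|HG] := Ftot _ _ FG FH.
  + by exists H => //; case: (Fdom _ FH) => HD _ _; apply: HD => //; exact: GH.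
  + by exists G => //; case: (Fdom _ FG) => GD _ _; apply: GD => //; exact: HG.
- by move=> t p [G FG Gp]; exists G => //; case: (Fdom _ FG) => _ GZ _; exact: GZ.
- by move=> p [G FG Gp]; case: (Fdom _ FG) => _ _ Gle; exact: Gle.
Qed.

Lemma dominated_graph_total (G0 : set (V * R)) :
  dominated_graph G0 -> G0 !=set0 ->
  exists2 A, dominated_graph A & G0 `<=` A /\ forall x, exists a, A (x, a).
Proof.
move=> domG0 G0_n0.
(* The empty graph is admitted, so that the empty chain has an upper bound. *)
pose P A := dominated_graph A /\ (A !=set0 -> G0 `<=` A).
have [A [[domA G0A] Amax]] : exists A, P A /\ forall B, A `<` B -> ~ P B.
  apply: Zorn_bigcup => F FP Ftot; split.
    by apply: dominated_graph_bigcup => // G /FP [].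
  by move=> [p [G FG Gp]] q G0q; exists G => //; apply: (FP G FG).2 => //; exists p.
have A_n0 : A !=set0.
  apply: contrapT => A0; apply: (Amax G0); last by split=> // _ ?.
  split; first by move=> p Ap; exfalso; apply: A0; exists p.
  by move=> G0A'; apply: A0; have [p G0p] := G0_n0; exists p; exact: G0A'.
have {}G0A := G0A A_n0.
exists A => //; split => // w; apply: contrapT => /forallNP Aw.
have [c Awc] := graph_extension_value domA w A_n0.
apply: (Amax (graph_extension A w c)); last split.
- split; first exact: graph_extension_sub.
  by move=> /(_ _ (graph_extension_new domA w c A_n0)); exact: Aw.
- exact: graph_extension_dominated.
- by move=> _; apply: subset_trans G0A (@graph_extension_sub _ _ _).
Qed.

Theorem ext_hahn_banach v c : 0 <= c -> (c%:E <= rho v)%E ->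
  exists f : V -> R, [/\ {morph f : x y / x + y}, forall t x, f (t *: x) = t * f x,
    forall x, ((f x)%:E <= rho x)%E & f v = c].
Proof.
move=> c_ge0 c_le.
have dom00 : dominated_graph [set (0, 0)].
  by split=> [_ _ -> ->|t _ ->|_ ->] /=; rewrite ?addr0 ?scaler0 ?mulr0 ?rho0.
pose G0 := graph_extension [set (0, 0)] v c.
have G0vc : G0 (v, c) by apply: graph_extension_new; last by exists (0, 0).
have domG0 : dominated_graph G0.
  apply: graph_extension_dominated => // _ _ [-> ->]; rewrite !add0r rhoN.
  by split=> //; apply: le_trans c_le; rewrite lee_fin; lra.
have [A domA [G0A Atot]] := dominated_graph_total domG0 (ex_intro _ _ G0vc).
pose f x := projT1 (cid (Atot x)).
have Af x : A (x, f x) := projT2 (cid (Atot x)).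
case: (domA) => AD AZ Ale; exists f; split.
- by move=> x y; apply: (dominated_graph_fun domA) (Af _) (AD _ _ (Af x) (Af y)).
- by move=> t x; apply: (dominated_graph_fun domA) (Af _) (AZ t _ (Af x)).
- by move=> x; exact: Ale _ (Af x).
- exact: (dominated_graph_fun domA) (Af v) (G0A _ G0vc).
Qed.

Lemma dominated_linear_norm (f : V -> R) :
  (forall t x, f (t *: x) = t * f x) -> (forall x, ((f x)%:E <= rho x)%E) ->
  forall x, (`|f x|%:E <= rho x)%E.
Proof.
move=> fZ f_le x; have [fx_ge0|fx_lt0] := leP 0 (f x); first by rewrite ger0_norm.
by rewrite ltr0_norm // -rhoN -mulN1r -fZ scaleN1r.
Qed.

End ExtendedHahnBanach.

Lemma ereal_gt0_lbound (R : realType) (e : \bar R) :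
  (0 < e)%E -> exists2 c : R, 0 < c & (c%:E <= e)%E.
Proof. by case: e => [r r_gt0| _ |//]; [exists r | exists 1 => //; exact: leey]. Qed.

Lemma real_seminorm_minorants (R : realType) (V : lmodType R) :
  has_seminorm_minorants (@Num.norm R R) V.
Proof.
move=> rho rho_sn v /eqP rho_v; case: (rho_sn) => rho_ge0 _ _.
have [c c_gt0 c_le] : exists2 c : R, 0 < c & (c%:E <= rho v)%E.
  by apply: ereal_gt0_lbound; rewrite lt0e rho_v rho_ge0.
have [f [fD fZ f_le fv]] := ext_hahn_banach rho_sn (ltW c_gt0) c_le.
exists (fun x => `|f x|).
  by split=> [x|a x|x y]; rewrite ?fZ ?normrM ?fD ?ler_normD.
split; first by rewrite fv gtr0_norm.
by exists 1 => // x; rewrite mul1e; exact: dominated_linear_norm.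
Qed.

(* [X] with its scalars restricted from [R[i]] to [R]. *)
Definition realified (R : rcfType) (X : lmodType R[i]) : Type := X.

HB.instance Definition _ (R : rcfType) (X : lmodType R[i]) :=
  GRing.Zmodule.on (realified X).

Section Realified.
Variables (R : rcfType) (X : lmodType R[i]).
Local Open Scope complex_scope.

Definition realified_scale (t : R) (x : realified X) : realified X := t%:C *: (x : X).

Fact realified_scaleA t u x :
  realified_scale t (realified_scale u x) = realified_scale (t * u) x.
Proof. by rewrite /realified_scale scalerA rmorphM. Qed.

Fact realified_scale1 x : realified_scale 1 x = x.
Proof. exact: scale1r. Qed.

Fact realified_scaleDr t x y :
  realified_scale t (x + y) = realified_scale t x + realified_scale t y.
Proof. exact: scalerDr. Qed.

Fact realified_scaleDl x t u :
  realified_scale (t + u) x = realified_scale t x + realified_scale u x.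
Proof. by rewrite /realified_scale rmorphD scalerDl. Qed.

HB.instance Definition _ := GRing.Zmodule_isLmodule.Build R (realified X)
  realified_scaleA realified_scale1 realified_scaleDr realified_scaleDl.

End Realified.

Section ComplexMinorants.
Variables (R : realType) (X : lmodType R[i]).
Local Open Scope complex_scope.

Lemma absC_real (t : R) : absC t%:C = `|t|.
Proof. by rewrite /absC /= expr0n addr0 sqrtr_sqr. Qed.

Lemma absC_i : absC ('i%C : R[i]) = 1.
Proof. by rewrite /absC /= expr0n add0r expr1n sqrtr1. Qed.

Lemma absCN1 : absC (-1 : R[i]) = 1.
Proof. by rewrite /absC /= oppr0 expr0n addr0 sqrrN expr1n sqrtr1. Qed.

Lemma absC0 : absC (0 : R[i]) = 0.
Proof. exact: ComplexField.Normc.normc0. Qed.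

Lemma absCM (a b : R[i]) : absC (a * b) = absC a * absC b.
Proof. exact: ComplexField.Normc.normcM. Qed.

Lemma ler_absCD (a b : R[i]) : absC (a + b) <= absC a + absC b.
Proof. exact: le_normcD. Qed.

Lemma ler_Re_absC (z : R[i]) : `|complex.Re z| <= absC z.
Proof.
case: z => a b; rewrite /absC /= -sqrtr_sqr ler_sqrt; first by rewrite lerDl sqr_ge0.
by rewrite addr_ge0 ?sqr_ge0.
Qed.

Lemma ler_absC_ReIm (z : R[i]) : absC z <= `|complex.Re z| + `|complex.Im z|.
Proof.
case: z => a b; rewrite /absC /=.
rewrite -(ger0_norm (addr_ge0 (normr_ge0 a) (normr_ge0 b))) -sqrtr_sqr.
rewrite ler_sqrt ?sqr_ge0 // sqrrD -(real_normK (num_real a)) -(real_normK (num_real b)).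
by rewrite addrAC lerDl mulrn_wge0 // mulr_ge0.
Qed.

Lemma ext_seminorm_realified (rho : X -> \bar R) : ext_seminorm (@absC R) rho ->
  ext_seminorm (@Num.norm R R) (rho : realified X -> \bar R).
Proof. by case=> rho_ge0 rhoZ rhoD; split=> // t x; rewrite -absC_real; exact: rhoZ. Qed.

Section Complexify.
Variable f : realified X -> R.
Hypotheses (fD : {morph f : x y / x + y}) (fZ : forall (t : R) x, f (t *: x) = t * f x).

Let fDC (x y : X) : f (x + y) = f x + f y := fD x y.
Let fZC (t : R) (x : X) : f (t%:C *: x) = t * f x := fZ t x.

(* The complex-linear functional whose real part is [f]. *)
Definition complexify (x : X) : R[i] := f x +i* - f ('i%C *: x).

Let f_scale (a : R[i]) (x : X) :
  f (a *: x) = complex.Re a * f x + complex.Im a * f ('i%C *: x).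
Proof.
by rewrite [in LHS](complexE a) [_ * (complex.Im a)%:C]mulrC scalerDl -scalerA fDC !fZC.
Qed.

Lemma complexifyD x y : complexify (x + y) = complexify x + complexify y.
Proof.
by rewrite /complexify scalerDr !fDC opprD; apply/eqP; rewrite eq_complex /= !eqxx.
Qed.

Lemma complexifyZ a x : complexify (a *: x) = a * complexify x.
Proof.
rewrite /complexify scalerA (f_scale a) (f_scale ('i%C * a)); case: a => a1 a2.
by apply/eqP; rewrite eq_complex /=; apply/andP; split; apply/eqP; ring.
Qed.

End Complexify.

Lemma complex_seminorm_minorants : has_seminorm_minorants (@absC R) X.
Proof.
move=> rho rho_sn v /eqP rho_v; case: (rho_sn) => rho_ge0 rhoZ _.
have [c c_gt0 c_le] : exists2 c : R, 0 < c & (c%:E <= rho v)%E.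
  by apply: ereal_gt0_lbound; rewrite lt0e rho_v rho_ge0.
have rho_snR := ext_seminorm_realified rho_sn.
have [f [fD fZ f_le fv]] := ext_hahn_banach rho_snR (ltW c_gt0) c_le.
exists (fun x => absC (complexify f x)).
  split=> [x|a x|x y]; first exact: sqrtr_ge0.
    by rewrite complexifyZ // absCM.
  by rewrite complexifyD //; exact: ler_absCD.
split; first by apply: lt_le_trans (ler_Re_absC _); rewrite /= fv gtr0_norm.
exists 2 => // x; rewrite mule_natl mule2n.
have f_abs := dominated_linear_norm rho_snR fZ f_le.
apply: le_trans (_ : (`|f x| + `|f ('i%C *: x)|)%:E <= _)%E.
  by rewrite lee_fin; apply: le_trans (ler_absC_ReIm _) _; rewrite /= normrN.
rewrite EFinD; apply: leeD; first exact: f_abs.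
have := f_abs ('i%C *: x); rewrite (rhoZ 'i%C x) absC_i mul1e; exact.
Qed.

End ComplexMinorants.

Theorem proposition3p9 (R : realType) :
  (forall (X : lmodType R) (tau tauF : set (set X)),
     ext_locally_convex (@Num.norm R R) tau ->
     finest_lc_topology (@Num.norm R R) tau tauF ->
     (hausdorff tau <-> hausdorff tauF)) /\
  (forall (X : lmodType R[i]) (tau tauF : set (set X)),
     ext_locally_convex (@absC R) tau ->
     finest_lc_topology (@absC R) tau tauF ->
     (hausdorff tau <-> hausdorff tauF)).
Proof.
split=> X.
- exact: @hausdorff_finest_lc _ _ _ X (normrN1 R) (normr0 R)
    (@real_seminorm_minorants R X).
- exact: @hausdorff_finest_lc _ _ _ X (@absCN1 R) (@absC0 R)
    (@complex_seminorm_minorants R X).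
Qed.
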